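(* Let $u$ be the field with $u(x+\tfrac12,t+\tfrac12)=(-1)^{(x-1)(t-1)}$ for all $(x,t)\in\mathbb{Z}^2$. For each $(x,t)\in\mathbb{Z}^2$ with $t\ge 1$ and either $(x,t)\equiv(2,1)\pmod 4$ or $(x,t)\equiv(0,3)\pmod 4$ (componentwise), the following hold: 1. $\sqrt2\, a_1(x+1,t,u)=a_1(x,t-1,u)=\sqrt2\, a_1(x-1,t,u)=a_1(x,t+1,u)=\sqrt2\, a_2(x+1,t,u)=\sqrt2\, a_2(x-1,t,u)-2a_2(x,t+1,u)$; 2. $a_2(x,t-1,u)=0$.
   Context: A checker path is a finite sequence of integer points $s_0,s_1,\dots,s_t$ in the plane such that each vector $s_{k+1}-s_k$ equals $(1,1)$ or $(-1,1)$. A turn is a point $s_k$ with $0<k<t$ such that the vectors $s_{k+1}-s_k$ and $s_{k-1}-s_k$ are orthogonal; $\mathrm{turns}(s)$ is the number of turns. An edge is a segment joining two diagonally adjacent integer points (differing by $(\pm1,1)$) whose coordinate sums are even; every step $s_ks_{k+1}$ of a checker path starting at $(0,0)$ is an edge. A field is a map $u$ from edges to $\{-1,1\}$; for half-integers $x,t$ (i.e. $x-\tfrac12,t-\tfrac12\in\mathbb{Z}$), $u(x,t)$ denotes the value of $u$ on the edge with midpoint $(x,t)$. For integers $x$ and $t\ge 0$ define $$a(x,t,u):=2^{(1-t)/2}\, i\sum_s(-i)^{\mathrm{turns}(s)}u(s_0s_1)u(s_1s_2)\cdots u(s_{t-1}s_t),$$ the sum over all checker paths $s=(s_0,\dots,s_t)$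 with $s_0=(0,0)$, $s_1=(1,1)$, $s_t=(x,t)$ (an empty sum is $0$; in particular $a(x,0,u)=0$). Let $a_1(x,t,u)$ and $a_2(x,t,u)$ be the real and imaginary parts of $a(x,t,u)$. *)

From HB Require Import structures.
From mathcomp Require Import all_boot all_order all_algebra all_field.
Set Implicit Arguments. Unset Strict Implicit. Unset Printing Implicit Defensive.
Import Order.TTheory GRing.Theory Num.Theory.
Local Open Scope ring_scope.

Definition point := (int * int)%type.

(* A field: u m n is the value (in {-1,1}) of u on the edge whose midpoint is
   (m + 1/2, n + 1/2).  Each such half-integer point is the midpoint of exactly
   one edge (the diagonal joining two points with even coordinate sums). *)
Definition field := int -> int -> algC.

Definition is_field (u : field) : Prop := forall m n, u m n = 1 \/ u m n = -1.

(* value of u on the edge joining p and q (diagonally adjacent): its midpoint is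
   (min p.1 q.1 + 1/2, min p.2 q.2 + 1/2). *)
Definition edge_val (u : field) (p q : point) : algC :=
  u (Num.min p.1 q.1) (Num.min p.2 q.2).

(* A checker path with t steps starting at (0,0) is encoded by its step
   directions d : 'I_t -> bool, true = (1,1), false = (-1,1). *)
Definition stepx (b : bool) : int := if b then 1 else -1.

Definition pt (t : nat) (d : {ffun 'I_t -> bool}) (k : nat) : point :=
  ((\sum_(i < t | (i < k)%N) stepx (d i))%R, (k%:Z)%R).

Definition vsub (p q : point) : point := (p.1 - q.1, p.2 - q.2).
Definition dot (p q : point) : int := p.1 * q.1 + p.2 * q.2.

Definition turns (t : nat) (d : {ffun 'I_t -> bool}) : nat :=
  #|[set k : 'I_t | (0 < val k)%N &&
      (dot (vsub (pt d (val k).+1) (pt d (val k)))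
           (vsub (pt d (val k).-1) (pt d (val k))) == 0)]|.

Definition a (x : int) (t : nat) (u : field) : algC :=
  (sqrtC 2) ^ (1 - t%:Z) * 'i *
  \sum_(d : {ffun 'I_t -> bool} |
          [&& (0 < t)%N, pt d 1 == (1, 1) & pt d t == (x, t%:Z)])
     (- 'i) ^+ turns d * \prod_(k < t) edge_val u (pt d k) (pt d k.+1).

Definition a1 (x : int) (t : nat) (u : field) : algC := 'Re (a x t u).
Definition a2 (x : int) (t : nat) (u : field) : algC := 'Im (a x t u).

Definition u0 : field := fun x t => (-1) ^ ((x - 1) * (t - 1)).

(* Grouping the checker paths by the direction of their last step turns the path sum
   into a pair of real functions A, B with a(x,t,u) = 2^((1-t)/2) (A + iB) satisfying the
   discrete Dirac equation
     A(t+1,x) = u(x,t) (A(t,x+1) + B(t,x+1)),   B(t+1,x) = u(x-1,t) (B(t,x-1) - A(t,x-1)).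
   For u0 the value u0 m n is -1 exactly when m and n are both even. Two steps of the
   recurrence then preserve the relations B(s,x) = 0 and A(s,x) = A(s,x+2) + B(s,x+2) on
   the lines x - s = 2 (mod 4), s even, and one or two further steps express every quantity
   of the theorem through A(s,x) and B(s+1,x-1). *)

From HB Require Import structures.
From mathcomp Require Import all_boot all_order all_algebra all_field.
From mathcomp Require Import zify ring.
Import Order.TTheory GRing.Theory Num.Theory.
Set Implicit Arguments. Unset Strict Implicit. Unset Printing Implicit Defensive.
Local Open Scope ring_scope.

Lemma sqrt2_neq0 : sqrtC 2 != 0 :> algC.
Proof. by rewrite sqrtC_eq0 pnatr_eq0. Qed.

Lemma sqrt2_exprz_real (z : int) : sqrtC 2 ^ z \is @Num.real algC.
Proof. by apply: ger0_real; rewrite exprz_ge0 // sqrtC_ge0 ler0n. Qed.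

Lemma sqrt2_exprz_S (t : nat) :
  sqrtC 2 ^ (1 - t.+1%:Z) = sqrtC 2 ^ (1 - t%:Z) / sqrtC 2 :> algC.
Proof.
by rewrite (_ : 1 - t.+1%:Z = 1 - t%:Z + (-1)) ?expfzDr ?exprN1 ?sqrt2_neq0 //; lia.
Qed.

Section PathSum.

Variable u : field.

Definition dir t (d : {ffun 'I_t -> bool}) (n : nat) : bool :=
  if insub n is Some j then d j else false.

Lemma dir_ord t (d : {ffun 'I_t -> bool}) (i : 'I_t) : dir d i = d i.
Proof. by rewrite /dir valK. Qed.

Definition xpos (f : nat -> bool) (n : nat) : int := \sum_(i < n) stepx (f i).

Lemma xposS f n : xpos f n.+1 = xpos f n + stepx (f n).
Proof. by rewrite /xpos big_ord_recr. Qed.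

Lemma eq_xpos f g n : (forall i, (i < n)%N -> f i = g i) -> xpos f n = xpos g n.
Proof. by move=> fg; apply: eq_bigr => i _; rewrite fg. Qed.

Lemma pt_dir t (d : {ffun 'I_t -> bool}) n :
  (n <= t)%N -> pt d n = (xpos (dir d) n, n%:Z).
Proof.
move=> le_nt; rewrite /pt /xpos (big_ord_widen t (fun i => stepx (dir d i))) //.
by congr pair; apply: eq_bigr => i _; rewrite dir_ord.
Qed.

Definition nturns (f : nat -> bool) (t : nat) : nat :=
  \sum_(k < t) ((0 < k)%N && (f k != f k.-1)).

Lemma eq_nturns f g t : (forall i, (i < t)%N -> f i = g i) -> nturns f t = nturns g t.
Proof.
move=> fg; apply: eq_bigr => -[k lt_kt] _ /=.
by rewrite !fg // (leq_ltn_trans (leq_pred k)).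
Qed.

Lemma nturnsS f t : nturns f t.+1 = (nturns f t + ((0 < t)%N && (f t != f t.-1)))%N.
Proof. by rewrite /nturns big_ord_recr. Qed.

(* Two consecutive steps are orthogonal exactly when their directions differ. *)
Lemma turns_dir t (d : {ffun 'I_t -> bool}) : turns d = nturns (dir d) t.
Proof.
rewrite /turns -sum1_card /nturns big_mkcond /=; apply: eq_bigr => k _.
rewrite inE; case: k => [[|k] lt_kt] //=.
rewrite !pt_dir ?(ltnW lt_kt) ?(ltnW (ltnW lt_kt)) // /vsub /dot /= !xposS.
by case: (dir d k.+1); case: (dir d k) => /=; case: ifP => /eqP; lia.
Qed.

Lemma edge_val_step (y : int) (k : nat) (b : bool) :
  edge_val u (y, k%:Z) (y + stepx b, k.+1%:Z) = u (if b then y else y - 1) k.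
Proof.
rewrite /edge_val /= (@min_l _ _ k%:Z k.+1%:Z); last by lia.
by case: b => /=; [rewrite min_l | rewrite min_r] => //; lia.
Qed.

Definition weight (f : nat -> bool) (t : nat) : algC :=
  (- 'i) ^+ nturns f t * \prod_(k < t) u (if f k then xpos f k else xpos f k - 1) k.

Definition path_to t (d : {ffun 'I_t -> bool}) (x : int) : bool :=
  [&& (0 < t)%N, xpos (dir d) 1 == 1 & xpos (dir d) t == x].

Lemma a_weight x t :
  a x t u = sqrtC 2 ^ (1 - t%:Z) * 'i *
            \sum_(d : {ffun 'I_t -> bool} | path_to d x) weight (dir d) t.
Proof.
congr (_ * _); apply: eq_big => d.
  by case: t d => [|t] d //=; rewrite /path_to !pt_dir // !xpair_eqE !eqxx !andbT.
move=> _; rewrite turns_dir; congr (_ * _); apply: eq_bigr => k _.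
by rewrite (pt_dir d (ltnW (ltn_ord k))) (pt_dir d (ltn_ord k)) xposS edge_val_step.
Qed.

Definition rcons_dirs t (d : {ffun 'I_t -> bool}) (b : bool) : {ffun 'I_t.+1 -> bool} :=
  [ffun i : 'I_t.+1 => if (i < t)%N then dir d i else b].

Lemma dir_rcons_dirs t (d : {ffun 'I_t -> bool}) b n :
  (n <= t)%N -> dir (rcons_dirs d b) n = if (n < t)%N then dir d n else b.
Proof. by rewrite -ltnS => lt_nt; rewrite -[n]/(val (Ordinal lt_nt)) dir_ord ffunE. Qed.

Lemma big_rcons_dirs (R : nmodType) t (P : pred {ffun 'I_t.+1 -> bool}) F :
  \sum_(e | P e) F e =
  \sum_(d : {ffun 'I_t -> bool}) \sum_(b | P (rcons_dirs d b)) F (rcons_dirs d b) :> R.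
Proof.
rewrite pair_big_dep /= (reindex (fun p => rcons_dirs p.1 p.2)) //.
exists (fun e : {ffun 'I_t.+1 -> bool} =>
          ([ffun j => e (widen_ord (leqnSn t) j)], e ord_max)) => [[d b] _ | e _].
  by congr pair; [apply/ffunP => j; rewrite !ffunE /= ltn_ord dir_ord | rewrite ffunE /= ltnn].
apply/ffunP => i; rewrite ffunE; case: ifP => lt_it.
  by rewrite -[val i]/(val (Ordinal lt_it)) dir_ord ffunE; congr (e _); apply: val_inj.
by congr (e _); apply: val_inj => /=; move: (ltn_ord i) lt_it; lia.
Qed.

Section Extension.

Variables (t : nat) (d : {ffun 'I_t -> bool}) (b : bool).

Lemma xpos_rcons_dirs n : (n <= t)%N -> xpos (dir (rcons_dirs d b)) n = xpos (dir d) n.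
Proof.
move=> le_nt; apply: eq_xpos => i lt_in.
by rewrite dir_rcons_dirs ?(leq_trans lt_in le_nt) // ltnW // (leq_trans lt_in).
Qed.

Lemma xpos_rcons_dirs_last : xpos (dir (rcons_dirs d b)) t.+1 = xpos (dir d) t + stepx b.
Proof. by rewrite xposS xpos_rcons_dirs // dir_rcons_dirs // ltnn. Qed.

Hypothesis t_gt0 : (0 < t)%N.

Lemma path_to_rcons_dirs x : path_to (rcons_dirs d b) x = path_to d (x - stepx b).
Proof.
rewrite /path_to xpos_rcons_dirs_last xpos_rcons_dirs // t_gt0.
by congr [&& _, _ & _]; apply/eqP/eqP => [<- | ->]; rewrite ?addrK ?subrK.
Qed.

Lemma weight_rcons_dirs :
  weight (dir (rcons_dirs d b)) t.+1 =
  weight (dir d) t * (- 'i) ^+ (b != dir d t.-1) *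
  u (if b then xpos (dir d) t else xpos (dir d) t - 1) t.
Proof.
have dir_lt i : (i < t)%N -> dir (rcons_dirs d b) i = dir d i.
  by move=> lt_it; rewrite dir_rcons_dirs ?lt_it // ltnW.
have dir_last : dir (rcons_dirs d b) t = b by rewrite dir_rcons_dirs // ltnn.
rewrite /weight nturnsS big_ord_recr /= t_gt0 dir_last dir_lt ?ltn_predL //.
rewrite xpos_rcons_dirs // (eq_nturns dir_lt).
rewrite (eq_bigr (fun k : 'I_t => u (if dir d k then xpos (dir d) k else xpos (dir d) k - 1) k)).
  by rewrite exprD; ring.
by move=> k _; rewrite dir_lt // xpos_rcons_dirs // ltnW.
Qed.

End Extension.

Definition partial_amp (x : int) (t : nat) (b : bool) : algC :=
  \sum_(d : {ffun 'I_t -> bool} | path_to d x && (dir d t.-1 == b)) weight (dir d) t.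

Lemma a_partial_amp x t :
  a x t u = sqrtC 2 ^ (1 - t%:Z) * 'i * (partial_amp x t false + partial_amp x t true).
Proof.
rewrite a_weight (bigID (fun d => dir d t.-1)) /=; congr (_ * _); rewrite addrC.
by congr (_ + _); apply: eq_bigl => d; case: (dir d t.-1); rewrite ?andbT ?andbF.
Qed.

Lemma partial_ampS x t b : (0 < t)%N ->
  partial_amp x t.+1 b = u (if b then x - 1 else x) t *
    (partial_amp (x - stepx b) t b - 'i * partial_amp (x - stepx b) t (~~ b)).
Proof.
move=> t_gt0; rewrite /partial_amp big_rcons_dirs /=.
set y := x - stepx b; set c := u _ t.
have last_weight (d : {ffun 'I_t -> bool}) : path_to d y ->
    weight (dir (rcons_dirs d b)) t.+1 = weight (dir d) t * (- 'i) ^+ (b != dir d t.-1) * c.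
  move=> /and3P[_ _ /eqP end_d]; rewrite weight_rcons_dirs // end_d /c /y.
  by case: (b) => /=; rewrite ?opprK ?addrK.
rewrite (eq_bigr (fun d => if path_to d y then weight (dir (rcons_dirs d b)) t.+1 else 0)).
  rewrite -big_mkcond (eq_bigr _ last_weight) -mulr_suml.
  rewrite (bigID (fun d => dir d t.-1 == b)) /= mulrC -mulNr mulr_sumr.
  congr (_ * (_ + _)); apply: eq_big => d.
  - by [].
  - by move=> /andP[_ /eqP ->]; rewrite eqxx mulr1.
  - by case: (dir d t.-1); case: (b).
  - by move=> /andP[_]; rewrite eq_sym => ->; rewrite mulrC.
move=> d _; rewrite big_mkcond big_bool /= !dir_rcons_dirs // ltnn !path_to_rcons_dirs //.
by rewrite /y; case: (b); rewrite /= ?andbT ?andbF ?addr0 ?add0r.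
Qed.

Lemma partial_amp1 x b : partial_amp x 1 b = if b && (x == 1) then u 0 0 else 0.
Proof.
rewrite /partial_amp big_rcons_dirs (big_pred1 [ffun i : 'I_0 => false]); last first.
  by move=> d; symmetry; apply/eqP/ffunP => -[].
rewrite big_mkcond big_bool /path_to /weight /nturns !big_ord1 /= !xpos_rcons_dirs_last.
rewrite !dir_rcons_dirs // /xpos !big_ord0 /= addr0 expr0 mul1r.
by rewrite eq_sym andbC; case: (b).
Qed.

(* Every path starts with the step (1,1), so the time-1 row is not given by the recurrence. *)
Fixpoint amp (t : nat) (x : int) : algC * algC :=
  match t with
  | 0 => (0, 0)
  | 1 => (0, if x == 1 then u 0 0 else 0)
  | t'.+1 => (u x t' * ((amp t' (x + 1)).1 + (amp t' (x + 1)).2),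
              u (x - 1) t' * ((amp t' (x - 1)).2 - (amp t' (x - 1)).1))
  end.

Lemma amp1S t x : (amp t.+1 x).1 = u x t * ((amp t (x + 1)).1 + (amp t (x + 1)).2).
Proof. by case: t => [|[|t]] //=; rewrite addr0 mulr0. Qed.

Lemma amp2S t x : (0 < t)%N || (x != 1) ->
  (amp t.+1 x).2 = u (x - 1) t * ((amp t (x - 1)).2 - (amp t (x - 1)).1).
Proof. by case: t => [|[|t]] //= /negPf ->; rewrite subr0 mulr0. Qed.

Lemma partial_amp_amp t x : (0 < t)%N ->
  partial_amp x t false = - 'i * (amp t x).1 /\ partial_amp x t true = (amp t x).2.
Proof.
elim: t x => [//|t IH] x _; have [-> | t_gt0] := posnP t.
  by rewrite !partial_amp1 /= mulr0.
rewrite !partial_ampS // amp1S amp2S ?t_gt0 //= opprK.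
have [-> ->] := IH (x + 1) t_gt0; have [-> ->] := IH (x - 1) t_gt0.
by split; [ring | rewrite mulrA mulrN mulCii; ring].
Qed.

Lemma a_amp x t : a x t u = sqrtC 2 ^ (1 - t%:Z) * ((amp t x).1 + 'i * (amp t x).2).
Proof.
case: (posnP t) => [-> | t_gt0].
  by rewrite /a big_pred0 //= !(mulr0, addr0).
have [A B] := partial_amp_amp x t_gt0.
rewrite a_partial_amp A B -mulrA; congr (_ * _).
by rewrite mulrDr mulrA mulrN mulCii; ring.
Qed.

Hypothesis u_real : forall m n, u m n \is Num.real.

Lemma amp_real t x : (amp t x).1 \is Num.real /\ (amp t x).2 \is Num.real.
Proof.
elim: t x => [|t IH] x; first by split; exact: real0.
case: (posnP t) => [-> | t_gt0].
  by split => /=; [exact: real0 | case: (x == 1); rewrite ?u_real ?real0].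
rewrite amp1S amp2S ?t_gt0 //; have [A1 B1] := IH (x + 1); have [A2 B2] := IH (x - 1).
by split; apply: realM; [apply: u_real | apply: realD | apply: u_real | apply: realB].
Qed.

Lemma a1_amp x t : a1 x t u = sqrtC 2 ^ (1 - t%:Z) * (amp t x).1.
Proof.
have [A B] := amp_real t x.
by rewrite /a1 a_amp (ReMl (sqrt2_exprz_real _)) Re_rect.
Qed.

Lemma a2_amp x t : a2 x t u = sqrtC 2 ^ (1 - t%:Z) * (amp t x).2.
Proof.
have [A B] := amp_real t x.
by rewrite /a2 a_amp (ImMl (sqrt2_exprz_real _)) Im_rect.
Qed.

End PathSum.

Lemma u0_real m n : u0 m n \is Num.real.
Proof. by rewrite rpredXz // rpredN rpred1. Qed.

Lemma sign_exprz_even (z : int) : (-1 : algC) ^ (2 * z) = 1.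
Proof. by rewrite -exprz_exp (_ : (-1) ^ 2 = 1) ?exp1rz // -exprnP sqrrN expr1n. Qed.

Lemma u0_odd_l x t : (x %% 2 = 1)%Z -> u0 x t = 1.
Proof.
move=> x_odd; have [m ->] : exists m, x = 2 * m + 1 by exists (x %/ 2)%Z; lia.
by rewrite /u0 (_ : _ * _ = 2 * (m * (t - 1))) ?sign_exprz_even //; ring.
Qed.

Lemma u0_odd_r x t : (t %% 2 = 1)%Z -> u0 x t = 1.
Proof.
move=> t_odd; have [n ->] : exists n, t = 2 * n + 1 by exists (t %/ 2)%Z; lia.
by rewrite /u0 (_ : _ * _ = 2 * (n * (x - 1))) ?sign_exprz_even //; ring.
Qed.

Lemma u0_even x t : (x %% 2 = 0)%Z -> (t %% 2 = 0)%Z -> u0 x t = -1.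
Proof.
move=> x_even t_even; have [m ->] : exists m, x = 2 * m by exists (x %/ 2)%Z; lia.
have [n ->] : exists n, t = 2 * n by exists (t %/ 2)%Z; lia.
rewrite /u0 (_ : _ * _ = 2 * (2 * m * n - m - n) + 1); last by ring.
by rewrite expfzDr ?sign_exprz_even ?mul1r // oppr_eq0 oner_eq0.
Qed.

Section U0.

Local Notation A t x := (amp u0 t x).1.
Local Notation B t x := (amp u0 t x).2.

Lemma amp1_u0_odd_time s x : (s %% 2 = 1)%N -> A s.+1 x = A s (x + 1) + B s (x + 1).
Proof. by move=> s_odd; rewrite amp1S u0_odd_r ?mul1r //; lia. Qed.

Lemma amp2_u0_odd_time s x : (s %% 2 = 1)%N -> B s.+1 x = B s (x - 1) - A s (x - 1).
Proof. by move=> s_odd; rewrite amp2S ?u0_odd_r ?mul1r //; [lia | apply/orP; lia]. Qed.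

Lemma amp1_u0_even_time s y : (s %% 2 = 0)%N -> (y %% 2 = 1)%Z ->
  A s.+1 y = A s (y + 1) + B s (y + 1).
Proof. by move=> s_even y_odd; rewrite amp1S u0_odd_l ?mul1r. Qed.

Lemma amp2_u0_even_time s y : (s %% 2 = 0)%N -> (y %% 2 = 1)%Z -> (0 < s)%N || (y != 1) ->
  B s.+1 y = A s (y - 1) - B s (y - 1).
Proof.
move=> s_even y_odd s_y; rewrite amp2S // u0_even; [by rewrite mulN1r opprB | lia | lia].
Qed.

Lemma amp_u0_two_steps s x : (0 < s)%N -> (s %% 2 = 0)%N -> (x %% 2 = 0)%Z ->
  A s.+2 x = A s x + A s (x + 2) - B s x + B s (x + 2) /\
  B s.+2 x = A s (x - 2) - B s (x - 2) - A s x - B s x.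
Proof.
move=> s_gt0 s_even x_even.
have s1_odd : (s.+1 %% 2 = 1)%N by lia.
have x1_odd : ((x + 1) %% 2 = 1)%Z by lia.
have x1'_odd : ((x - 1) %% 2 = 1)%Z by lia.
have s_pos (y : int) : (0 < s)%N || (y != 1) by rewrite s_gt0.
rewrite (amp1_u0_odd_time _ s1_odd) (amp2_u0_odd_time _ s1_odd).
rewrite (amp1_u0_even_time s_even x1_odd) (amp2_u0_even_time s_even x1_odd (s_pos _)).
rewrite (amp1_u0_even_time s_even x1'_odd) (amp2_u0_even_time s_even x1'_odd (s_pos _)).
have -> : x + 1 + 1 = x + 2 by ring.
have -> : x - 1 - 1 = x - 2 by ring.
by rewrite addrK subrK; split; ring.
Qed.

Lemma amp_u0_invariant n x : ((x - (2 * n)%:Z) %% 4 = 2)%Z ->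
  B (2 * n) x = 0 /\ A (2 * n) x = A (2 * n) (x + 2) + B (2 * n) (x + 2).
Proof.
elim: n x => [|[|n] IH] x x_mod.
- by rewrite muln0 /= addr0.
- rewrite muln1 !(amp1_u0_odd_time (s := 1)) ?(amp2_u0_odd_time (s := 1)) //= !add0r !subr0.
  have -> : (x - 1 == 1) = false by apply/negbTE/eqP; lia.
  have -> : (x + 2 + 1 == 1) = false by apply/negbTE/eqP; lia.
  by rewrite (_ : x + 2 - 1 = x + 1) ?add0r //; ring.
have s_gt0 : (0 < 2 * n.+1)%N by [].
have [Ax Bx] := amp_u0_two_steps (x := x) s_gt0 (modnMr _ _) ltac:(lia).
have [Ax2 Bx2] := amp_u0_two_steps (x := x + 2) s_gt0 (modnMr _ _) ltac:(lia).
have [Bm Am] := IH (x - 2) ltac:(lia); have [Bp Ap] := IH (x + 2) ltac:(lia).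
rewrite mulnS; rewrite addrK in Bx2; rewrite subrK in Am.
by rewrite Ax Bx Ax2 Bx2 Bm Bp Am Ap; split; ring.
Qed.

Lemma amp_u0_relations n x : ((x - (2 * n)%:Z) %% 4 = 2)%Z ->
  [/\ A (2 * n).+1 (x + 1) = A (2 * n) x, A (2 * n).+1 (x - 1) = A (2 * n) x,
      B (2 * n).+1 (x + 1) = A (2 * n) x, A (2 * n).+2 x = 2 * A (2 * n) x
    & B (2 * n).+2 x = B (2 * n).+1 (x - 1) - A (2 * n) x].
Proof.
move=> x_mod; have [B0 A0] := amp_u0_invariant x_mod.
have s_even : ((2 * n) %% 2 = 0)%N by rewrite modnMr.
have x1_odd : ((x + 1) %% 2 = 1)%Z by lia.
have x1'_odd : ((x - 1) %% 2 = 1)%Z by lia.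
have x_pos : (0 < 2 * n)%N || (x + 1 != 1) by apply/orP; lia.
have Ar : A (2 * n).+1 (x + 1) = A (2 * n) x.
  by rewrite (amp1_u0_even_time s_even x1_odd) (_ : x + 1 + 1 = x + 2) -?A0 //; ring.
have Al : A (2 * n).+1 (x - 1) = A (2 * n) x.
  by rewrite (amp1_u0_even_time s_even x1'_odd) subrK B0 addr0.
have Br : B (2 * n).+1 (x + 1) = A (2 * n) x.
  by rewrite (amp2_u0_even_time s_even x1_odd x_pos) addrK B0 subr0.
have s1_odd : ((2 * n).+1 %% 2 = 1)%N by lia.
split => //; first by rewrite (amp1_u0_odd_time _ s1_odd) Ar Br; ring.
by rewrite (amp2_u0_odd_time _ s1_odd) Al.
Qed.

End U0.

Theorem theorem4 (x : int) (t : nat) :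
  (1 <= t)%N ->
  ((x %% 4 = 2)%Z /\ (t %% 4 = 1)%N \/ (x %% 4 = 0)%Z /\ (t %% 4 = 3)%N) ->
  (sqrtC 2 * a1 (x + 1) t u0 = a1 x t.-1 u0 /\
   a1 x t.-1 u0 = sqrtC 2 * a1 (x - 1) t u0 /\
   sqrtC 2 * a1 (x - 1) t u0 = a1 x t.+1 u0 /\
   a1 x t.+1 u0 = sqrtC 2 * a2 (x + 1) t u0 /\
   sqrtC 2 * a2 (x + 1) t u0 = sqrtC 2 * a2 (x - 1) t u0 - 2 * a2 x t.+1 u0) /\
  a2 x t.-1 u0 = 0.
Proof.
move=> t_gt0 x_t_mod.
have [n -> x_mod] : exists2 n, t = (2 * n).+1 & ((x - (2 * n)%:Z) %% 4 = 2)%Z.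
  by exists (t %/ 2)%N; case: x_t_mod; lia.
have [B0 _] := amp_u0_invariant x_mod.
have [Ar Al Br A2 B2] := amp_u0_relations x_mod.
rewrite /= !(a1_amp u0_real) !(a2_amp u0_real) !sqrt2_exprz_S Ar Al Br A2 B2 B0.
have sqrt2_sq : (2 : algC) = sqrtC 2 ^+ 2 by rewrite sqrtCK.
move: (sqrtC 2 ^ _) (amp u0 (2 * n) x).1 (amp u0 (2 * n).+1 (x - 1)).2 => c A0 B1.
move: (sqrtC 2) sqrt2_neq0 sqrt2_sq => r r_neq0 ->.
by split; [do !split | ]; field.
Qed.
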